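(* Let $G$ be a finite group, $A$ an abelian group and $f:G\to A$ an arbitrary function. Let $f^{g_1},\dots,f^{g_n}$ (with $g_1,\dots,g_n\in G$) be the distinct elements of the set $\{f^g: g\in G\}$. Then the function $\overline f:G\to A$ defined by $\overline f(x)=\prod_{i=1}^n f^{g_i}(x)$ is a group homomorphism.
   Context: For a function $f:G\to A$ and $a\in G$, $f^a:G\to A$ is defined by $f^a(x)=f(a)^{-1}f(ax)$. *)

(* The finite group G is the whole finGroupType gT; the
   abelian group A is a zmodType, written additively (so the product of the
   paper becomes a sum, and f(a)^{-1} f(ax) becomes f(a x) - f(a)). *)
From HB Require Import structures.
From mathcomp Require Import all_boot all_order all_algebra all_fingroup.
Set Implicit Arguments. Unset Strict Implicit. Unset Printing Implicit Defensive.
Import GRing.Theory.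

Local Open Scope group_scope.

(* f^a : x |-> f(a)^{-1} f(a x), as a finite function (so that equality of
   such functions is decidable and distinctness is meaningful). *)
Definition fshift (gT : finGroupType) (A : zmodType) (f : gT -> A) (a : gT)
  : {ffun gT -> A} := [ffun x => (f (a * x)%g - f a)%R].

Definition fshifts (gT : finGroupType) (A : zmodType) (f : gT -> A)
  : seq {ffun gT -> A} := undup [seq fshift f g | g <- enum gT].

Definition fbar (gT : finGroupType) (A : zmodType) (f : gT -> A) (x : gT) : A :=
  (\sum_(h <- fshifts f) h x)%R.

From HB Require Import structures.
From mathcomp Require Import all_boot all_order all_algebra all_fingroup.

(* Translating by x acts on the shifts by (f^g)^x = f^(gx), i.e. as a
   permutation of the set {f^g : g in G}.  Since f^g(xy) = f^g(x) + (f^g)^x(y),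
   summing over that set gives fbar(xy) = fbar(x) + fbar(y). *)

Set Implicit Arguments. Unset Strict Implicit. Unset Printing Implicit Defensive.
Import GRing.Theory.
Local Open Scope group_scope.

Section Shifts.

Variables (gT : finGroupType) (A : zmodType).
Implicit Types (f : gT -> A) (h : {ffun gT -> A}).

Lemma fshiftE f a x : fshift f a x = (f (a * x)%g - f a)%R.
Proof. by rewrite ffunE. Qed.

Lemma fshift_at1 f a : fshift f a 1 = 0%R.
Proof. by rewrite fshiftE mulg1 subrr. Qed.

Lemma fshift1 h : h 1 = 0%R -> fshift h 1 = h.
Proof. by move=> h1; apply/ffunP=> x; rewrite fshiftE mul1g h1 subr0. Qed.

Lemma fshiftM f a b : fshift (fshift f a) b = fshift f (a * b).
Proof.
by apply/ffunP=> x; rewrite !fshiftE mulgA opprB addrA subrK.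
Qed.

Lemma fshift_split f x y : f (x * y) = (fshift f x y + f x)%R.
Proof. by rewrite fshiftE subrK. Qed.

Lemma mem_fshifts f h : (h \in fshifts f) = [exists g, h == fshift f g].
Proof.
rewrite mem_undup; apply/mapP/existsP=> [[g _ ->]|[g /eqP ->]].
  by exists g.
by exists g; rewrite ?mem_enum.
Qed.

Lemma fshifts_at1 f h : h \in fshifts f -> h 1 = 0%R.
Proof. by rewrite mem_fshifts => /existsP[g /eqP ->]; apply: fshift_at1. Qed.

Lemma perm_fshifts_translate f x :
  perm_eq [seq fshift h x | h <- fshifts f] (fshifts f).
Proof.
apply: uniq_perm => [|| k].
- rewrite map_inj_in_uniq ?undup_uniq // => h1 h2 h1f h2f eq12.
  (* shifts vanish at 1, so shifting by x^-1 undoes shifting by x *)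
  have /(congr1 (fun h => fshift h x^-1)) := eq12.
  by rewrite !fshiftM mulgV !fshift1 // (fshifts_at1 h1f, fshifts_at1 h2f).
- exact: undup_uniq.
- apply/mapP/idP.
    case=> _ /[1!mem_fshifts] /existsP[g /eqP ->] ->.
    by rewrite fshiftM mem_fshifts; apply/existsP; exists (g * x).
  rewrite mem_fshifts => /existsP[g /eqP ->].
  exists (fshift f (g * x^-1)); last by rewrite fshiftM mulgKV.
  by rewrite mem_fshifts; apply/existsP; exists (g * x^-1).
Qed.

End Shifts.

Theorem mainTheorem5 (gT : finGroupType) (A : zmodType) (f : gT -> A) :
  forall x y : gT, fbar f (x * y)%g = (fbar f x + fbar f y)%R.
Proof.
move=> x y; rewrite /fbar.
under eq_bigr do rewrite fshift_split.
rewrite big_split /= addrC; congr (_ + _)%R.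
by rewrite -[in RHS](perm_big _ (perm_fshifts_translate f x)) big_map.
Qed.
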